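(* Let $N$ and $M$ be large positive parameters, let $\mathcal{X}$ be any subset of $\{1,2,\ldots,10^M\}$, and let $\Delta=\Delta(N)$ be any function with $\Delta\to\infty$. For a prime $p$, let $J_p$ be the number of solutions of $$x\equiv y\pmod p;\qquad x,y\in\mathcal{X}.$$ Then for $\pi(N)\bigl(1+O(1/\Delta)\bigr)$ primes $p\le N$ we have $$J_p=|\mathcal{X}|+O\!\left(\frac{|\mathcal{X}|^2 M}{\pi(N)\log M}\,\Delta\right).$$
   Context: $\pi(N)$ denotes the number of primes $p\le N$. *)

From mathcomp Require Import all_boot.
From Stdlib Require Import Reals.

Definition primepi (N : nat) : nat := count prime (iota 0 N.+1).

(* J_p(X) = #{(x,y) in X x X : x = y mod p}, X given as a duplicate-free list *)
Definition Jp (X : seq nat) (p : nat) : nat :=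
  size [seq xy <- [seq (x, y) | x <- X, y <- X] | xy.1 == xy.2 %[mod p]].

Definition tends_to_infty (D : nat -> R) : Prop :=
  forall B : R, exists n0 : nat, forall n : nat, (n0 <= n)%N -> (B <= D n)%R.

Definition Rleb_dec (a b : R) : bool := if Rle_dec a b then true else false.

Definition good_primes (X : seq nat) (N : nat) (E : R) : nat :=
  count (fun p => prime p && Rleb_dec (Rabs (INR (Jp X p) - INR (size X))) E)
        (iota 0 N.+1).

From mathcomp Require Import all_boot zify.
From Stdlib Require PeanoNat.

Set Implicit Arguments.
Unset Strict Implicit.

(* Write J_p = |X| + J'_p, where J'_p counts the pairs x <> y of X with
   p | x - y.  A nonzero integer below 10^M has at most sqrt M prime factors
   up to sqrt M and at most log_(sqrt M + 1) 10^M larger ones, so at most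
   O(M / log M) prime factors; summing over pairs, sum_(p <= N) J'_p is
   O(|X|^2 M / log M).  By Markov's inequality, J'_p exceeds the error bound E
   for at most (sum_p J'_p) / E primes, which for the chosen E is at most
   4 pi(N) / Delta. *)

Lemma size_primes_le s n : 0 < s -> 0 < n -> size (primes n) <= s + trunc_log s.+1 n.
Proof.
move=> s_gt0 n_gt0; rewrite -(count_predC (fun p => p <= s) (primes n)) leq_add //.
  rewrite -size_filter -[leqRHS](size_iota 1).
  apply: uniq_leq_size; first by rewrite filter_uniq ?primes_uniq.
  move=> p; rewrite mem_filter mem_iota mem_primes => /andP[le_ps /andP[/prime_gt0 -> _]].
  by rewrite add1n ltnS.
apply: trunc_log_max => //; rewrite -iter_muln_1 -big_const_seq /=.
have n_eq : n = \prod_(p <- primes n) p ^ logn p n.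
  by rewrite {1}(prod_prime_decomp n_gt0) prime_decompE big_map.
rewrite [leqRHS]n_eq [leqRHS](bigID (fun p => p <= s)) /= -[leqLHS]mul1n leq_mul //.
  by rewrite prodn_gt0 // => p; rewrite expn_gt0 orbC -logn_gt0.
rewrite big_seq_cond [leqRHS]big_seq_cond leq_prod // => p /andP[].
rewrite -logn_gt0 -ltnNge => logn_gt0 gt_ps; have p_gt0 := leq_trans s_gt0 (ltnW gt_ps).
by rewrite (leq_trans gt_ps) // -{1}[p]expn1 leq_pexp2l.
Qed.

Lemma sqrt_gt0 M : 0 < M -> 0 < Nat.sqrt M.
Proof. by have := PeanoNat.Nat.sqrt_spec' M; nia. Qed.

Definition omega_max (M : nat) : nat := Nat.sqrt M + trunc_log (Nat.sqrt M).+1 (10 ^ M).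

Lemma size_primes_le_omega_max M n : 0 < M -> 0 < n <= 10 ^ M ->
  size (primes n) <= omega_max M.
Proof.
move=> M_gt0 /andP[n_gt0 le_n].
rewrite (leq_trans (size_primes_le (sqrt_gt0 M_gt0) n_gt0)) //.
by rewrite leq_add2l leq_trunc_log.
Qed.

Lemma count_prime_dvd_le (l : seq nat) n : uniq l -> 0 < n ->
  count (fun p => prime p && (p %| n)) l <= size (primes n).
Proof.
move=> ul n_gt0; rewrite -size_filter uniq_leq_size ?filter_uniq // => p.
by rewrite mem_filter mem_primes n_gt0 => /andP[/andP[-> ->]].
Qed.

Lemma count_prime_congr_le (l : seq nat) M x y : uniq l -> 0 < M -> x != y ->
  0 < x <= 10 ^ M -> 0 < y <= 10 ^ M ->
  count (fun p => prime p && (x == y %[mod p])) l <= omega_max M.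
Proof.
move=> ul M_gt0; wlog lt_yx : x y / y < x => [hwlog ne_xy hx hy|].
  have [lt_xy|lt_yx|eq_xy] := ltngtP x y; last by rewrite eq_xy eqxx in ne_xy.
    have sym : count (fun p => prime p && (x == y %[mod p])) l
             = count (fun p => prime p && (y == x %[mod p])) l.
      by apply: eq_count => p; rewrite eq_sym.
    by rewrite sym hwlog // eq_sym.
  exact: hwlog.
move=> _ hx hy; rewrite (@eq_count _ _ (fun p => prime p && (p %| x - y))); last first.
  by move=> p; rewrite (eqn_mod_dvd _ (ltnW lt_yx)).
apply: leq_trans (count_prime_dvd_le ul _) (size_primes_le_omega_max M_gt0 _); lia.
Qed.

Lemma count_diag_allpairs (T : eqType) (X : seq T) : uniq X ->
  count (fun xy : T * T => xy.1 == xy.2) [seq (x, y) | x <- X, y <- X] = size X.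
Proof.
move=> uX; rewrite count_flatten sumnE !big_map -sum1_size big_seq [RHS]big_seq.
apply: eq_bigr => x xX; rewrite count_map.
have := count_uniq_mem x uX; rewrite xX => /= <-.
by apply: eq_count => y; rewrite /= eq_sym.
Qed.

Definition Jp_offdiag (X : seq nat) (p : nat) : nat :=
  count (fun xy : nat * nat => (xy.1 != xy.2) && (xy.1 == xy.2 %[mod p]))
        [seq (x, y) | x <- X, y <- X].

Lemma sum_Jp_offdiag_le N M X : 0 < M -> all (fun x => 0 < x <= 10 ^ M) X ->
  \sum_(p <- iota 0 N.+1 | prime p) Jp_offdiag X p <= size X ^ 2 * omega_max M.
Proof.
move=> M_gt0 /allP X_range.
under eq_bigr => p _ do rewrite /Jp_offdiag -sum1_count big_mkcond.
rewrite exchange_big.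
under eq_bigr => xy _ do rewrite -big_mkcondr sum1_count.
have pair_bound xy : xy \in [seq (x, y) | x <- X, y <- X] ->
    count (fun p => prime p && ((xy.1 != xy.2) && (xy.1 == xy.2 %[mod p]))) (iota 0 N.+1)
    <= omega_max M.
  case/allpairsP=> [[x y] [xX yX ->]].
  have [<-|ne_xy] := eqVneq x y.
    by rewrite (@eq_count _ _ pred0) ?count_pred0 // => p; rewrite /= andbF.
  exact: count_prime_congr_le (iota_uniq 0 N.+1) M_gt0 ne_xy (X_range _ xX) (X_range _ yX).
rewrite big_seq (leq_trans (leq_sum _ pair_bound)) // -big_seq big_const_seq count_predT.
by rewrite (size_allpairs pair) iter_addn_0 mulnn mulnC.
Qed.

(* Imported only now: Reals rebinds the nat notation [^] to [Nat.pow]. *)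
From Stdlib Require Import Reals Lra.

Lemma Jp_diag_offdiag X p : uniq X -> Jp X p = size X + Jp_offdiag X p.
Proof.
move=> uX; rewrite /Jp -(count_predC (fun xy : nat * nat => xy.1 == xy.2)) !count_filter.
rewrite -(count_diag_allpairs uX); congr (_ + _); apply: eq_count => -[x y] /=.
by case: eqVneq => [->|]; rewrite ?eqxx.
Qed.

Lemma ln_le x y : (0 < x -> x <= y -> ln x <= ln y)%R.
Proof. by move=> x_gt0 [/(ln_increasing _ _ x_gt0)/Rlt_le | ->] //; apply: Rle_refl. Qed.

Lemma ln_le_sub1 x : (0 < x -> ln x <= x - 1)%R.
Proof. by move=> x_gt0; have := exp_ineq1_le (ln x); rewrite exp_ln //; lra. Qed.

Lemma expn_Nat_pow m n : expn m n = Nat.pow m n.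
Proof. by elim: n => // n IH; rewrite expnS IH. Qed.

Lemma INR_expn m n : INR (expn m n) = (INR m ^ n)%R.
Proof. by rewrite expn_Nat_pow pow_INR. Qed.

Lemma trunc_log_mul_ln b n : 1 < b -> 0 < n ->
  (INR (trunc_log b n) * ln (INR b) <= ln (INR n))%R.
Proof.
move=> b_gt1 n_gt0; rewrite -ln_pow; last by apply: lt_0_INR; lia.
rewrite -INR_expn; apply: ln_le; first by apply/lt_0_INR/ltP; rewrite expn_gt0; lia.
by apply/le_INR/leP/trunc_logP.
Qed.

Lemma ln_le_2ln_sqrt_succ M : 0 < M ->
  (ln (INR M) <= 2 * ln (INR (Nat.sqrt M).+1))%R.
Proof.
move=> M_gt0; have sqrt_M := PeanoNat.Nat.sqrt_spec' M.
have s1_gt0 : (0 < INR (Nat.sqrt M).+1)%R by apply: lt_0_INR; lia.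
rewrite (_ : (2 * _)%R = ln (INR ((Nat.sqrt M).+1 * (Nat.sqrt M).+1))).
  by apply: ln_le; [apply: lt_0_INR | apply: le_INR]; lia.
by rewrite mult_INR ln_mult //; lra.
Qed.

Lemma sqrt_mul_ln_le M : 0 < M -> (INR (Nat.sqrt M) * ln (INR M) <= 2 * INR M)%R.
Proof.
move=> M_gt0; have lnM := ln_le_2ln_sqrt_succ M_gt0.
have s_ge0 := pos_INR (Nat.sqrt M).
have ln_s1 : (ln (INR (Nat.sqrt M).+1) <= INR (Nat.sqrt M))%R.
  by rewrite S_INR; apply: Rle_trans (ln_le_sub1 _) _; lra.
have sq_le : (INR (Nat.sqrt M) * INR (Nat.sqrt M) <= INR M)%R.
  by rewrite -mult_INR; apply: le_INR; have := PeanoNat.Nat.sqrt_spec' M; lia.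
nra.
Qed.

Lemma omega_max_mul_ln_le M : 0 < M -> (INR (omega_max M) * ln (INR M) <= 20 * INR M)%R.
Proof.
move=> M_gt0; rewrite /omega_max plus_INR.
set s := Nat.sqrt M; set K := trunc_log s.+1 (expn 10 M).
have s_ge0 := pos_INR s; have K_ge0 := pos_INR K.
have K_ln : (INR K * ln (INR s.+1) <= INR M * ln 10)%R.
  have := @trunc_log_mul_ln s.+1 (expn 10 M) (sqrt_gt0 M_gt0) (expn_gt0 10 M).
  rewrite INR_expn ln_pow; last by apply: lt_0_INR; lia.
  by rewrite (_ : INR 10 = 10%R) //= ; lra.
have ln10 : (INR M * ln 10 <= INR M * 9)%R.
  apply: Rmult_le_compat_l; first exact: pos_INR.
  by apply: Rle_trans (ln_le_sub1 _) _; lra.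
have K_lnM : (INR K * ln (INR M) <= INR K * (2 * ln (INR s.+1)))%R.
  exact: Rmult_le_compat_l K_ge0 (ln_le_2ln_sqrt_succ M_gt0).
have := sqrt_mul_ln_le M_gt0; rewrite -/s; lra.
Qed.

Lemma Rleb_decP x y : reflect (x <= y)%R (Rleb_dec x y).
Proof. by rewrite /Rleb_dec; case: Rle_dec => h; constructor. Qed.

Lemma markov_count_ge (T : Type) (l : seq T) (a : pred T) (f : T -> nat) (E : R) :
  (0 < E)%R ->
  (INR (count a l) - INR (\sum_(t <- l | a t) f t) / E
   <= INR (count (fun t => a t && Rleb_dec (INR (f t)) E) l))%R.
Proof.
move=> E_gt0; elim: l => [|t l IH]; first by rewrite big_nil /=; lra.
rewrite big_cons -[count a _]/(a t + count a l)%N.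
rewrite -[count _ (t :: l)]/((a t && Rleb_dec (INR (f t)) E) + count _ l)%N.
case: (a t); last by rewrite !add0n.
have inv_E_ge0 : (0 <= / E)%R by apply/Rlt_le/Rinv_0_lt_compat.
rewrite !plus_INR /Rdiv Rmult_plus_distr_r /=.
case: Rleb_decP => [_|/Rnot_le_lt f_gt] /=.
  by have := Rmult_le_pos _ _ (pos_INR (f t)) inv_E_ge0; lra.
have : (1 <= INR (f t) * / E)%R.
  by rewrite -(Rinv_r E); [apply: Rmult_le_compat_r; lra | lra].
lra.
Qed.

Lemma good_primes_offdiag X N E : uniq X ->
  good_primes X N E =
  count (fun p => prime p && Rleb_dec (INR (Jp_offdiag X p)) E) (iota 0 N.+1).
Proof.
move=> uX; apply: eq_count => p.
by rewrite Jp_diag_offdiag // plus_INR Rplus_minus_l Rabs_pos_eq //; apply: pos_INR.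
Qed.

Lemma good_primes_nil N E : (0 <= E)%R -> good_primes [::] N E = primepi N.
Proof.
move=> E_ge0; rewrite good_primes_offdiag //; apply: eq_count => p.
by rewrite (introT (Rleb_decP _ _) E_ge0) andbT.
Qed.

Lemma markov_error_le (pi S x W m L d : R) :
  (0 < pi -> 1 <= x -> 0 < m -> 0 < L -> 1 <= d ->
   S <= x ^ 2 * W -> W * L <= 20 * m ->
   pi * (1 - 5 / d) <= pi - S / (5 * (x ^ 2 * m) / (pi * L) * d))%R.
Proof.
move=> pi_gt0 x_ge1 m_gt0 L_gt0 d_ge1 S_le WL_le.
have x2_ge1 : (1 <= x ^ 2)%R by rewrite -(pow1 2); apply: pow_incr; lra.
have c_gt0 : (0 < 5 * (x ^ 2 * m))%R by nra.
have -> : (S / (5 * (x ^ 2 * m) / (pi * L) * d) = S * (pi * L) / (5 * (x ^ 2 * m)) / d)%R.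
  by field; repeat split; lra.
have SpiL_le : (S * (pi * L) <= 4 * pi * (5 * (x ^ 2 * m)))%R.
  have x2_ge0 : (0 <= x ^ 2)%R by lra.
  have piL_ge0 : (0 <= pi * L)%R by nra.
  apply: Rle_trans (Rmult_le_compat_r _ _ _ piL_ge0 S_le) _.
  have := Rmult_le_compat_l _ _ _ (Rmult_le_pos _ _ x2_ge0 (Rlt_le _ _ pi_gt0)) WL_le.
  lra.
have : (S * (pi * L) / (5 * (x ^ 2 * m)) <= 4 * pi)%R.
  apply: (Rmult_le_reg_r _ _ _ c_gt0).
  by rewrite /Rdiv Rmult_assoc Rinv_l; lra.
have : (0 < / d)%R by apply: Rinv_0_lt_compat; lra.
rewrite /Rdiv; nra.
Qed.

Lemma primepi_gt0 N : 1 < N -> 0 < primepi N.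
Proof. by move=> N_gt1; rewrite /primepi -has_count; apply/hasP; exists 2; rewrite ?mem_iota. Qed.

Theorem lemma5 :
  exists C : R, (0 < C)%R /\
  exists M0 : nat,
  forall D : nat -> R, tends_to_infty D ->
  exists N0 : nat,
  forall (N M : nat), (N0 <= N)%N -> (M0 <= M)%N ->
  forall X : seq nat, uniq X -> all (fun x => (1 <= x <= 10 ^ M)%N) X ->
  (INR (primepi N) * (1 - C / D N) <=
   INR (good_primes X N
          (C * (INR (size X) ^ 2 * INR M)
             / (INR (primepi N) * ln (INR M)) * D N)))%R.
Proof.
exists 5%R; split; first lra.
exists 2 => D D_infty; have [N0 D_ge1] := D_infty 1%R.
exists (maxn N0 2) => N M; rewrite geq_max => /andP[/D_ge1 DN_ge1 N_ge2] M_ge2 X uX X_range.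
have pi_gt0 : (0 < INR (primepi N))%R by apply/lt_0_INR/ltP/primepi_gt0.
have lnM_gt0 : (0 < ln (INR M))%R by rewrite -ln_1; apply: ln_increasing; [lra | apply: (lt_INR 1); lia].
have [-> | X_ne] := eqVneq X [::].
  rewrite good_primes_nil; last by rewrite /= /Rdiv; lra.
  have := Rlt_mult_inv_pos 5 (D N) ltac:(lra) ltac:(lra); rewrite /Rdiv; nra.
have x_ge1 : (1 <= INR (size X))%R by apply/(le_INR 1)/leP; rewrite lt0n size_eq0.
have X_range_expn : all (fun x => 0 < x <= expn 10 M) X by rewrite expn_Nat_pow.
have E_gt0 : (0 < 5 * (INR (size X) ^ 2 * INR M) / (INR (primepi N) * ln (INR M)) * D N)%R.
  have x2_ge1 : (1 <= INR (size X) ^ 2)%R by rewrite -(pow1 2); apply: pow_incr; lra.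
  have M_gt0 : (0 < INR M)%R by apply: (lt_INR 0); lia.
  have inv_gt0 : (0 < / (INR (primepi N) * ln (INR M)))%R.
    exact/Rinv_0_lt_compat/Rmult_lt_0_compat.
  rewrite /Rdiv; repeat apply: Rmult_lt_0_compat => //; lra.
rewrite good_primes_offdiag //; apply: Rle_trans (markov_count_ge _ _ _ E_gt0).
apply: (markov_error_le (W := INR (omega_max M))) => //.
- by apply: (lt_INR 0); lia.
- by rewrite -INR_expn -mult_INR; apply/le_INR/leP/sum_Jp_offdiag_le => //; lia.
- by apply: omega_max_mul_ln_le; lia.
Qed.
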